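(* In the setting described in the context, the map $\varphi$ defined by $\varphi(d)(x,y)=d(x,\cdot)+d(y,\cdot)-d(x,y)-d(\cdot,\cdot)+m$ is a bijection from the set of metrics on $A$ that belong to $\mathcal{B}_2$ onto the set of $\Sigma_m$-proximities on $A$, with inverse $\psi(\sigma)(x,y)=\tfrac12(\sigma(x,x)+\sigma(y,y))-\sigma(x,y)$.
   Context: $A$ is a nonempty set (possibly infinite); $m\in\mathbb{R}$. A metric on $A$ is a function $d:A^2\to\mathbb{R}$ such that for all $x,y,z\in A$: $d(x,y)=0$ iff $x=y$, and $d(x,y)+d(x,z)-d(y,z)\ge0$. $\mathcal{B}_1$ is a set of functions $A\to\mathbb{R}$ forming a real linear space containing all constant functions, and $\mu:\mathcal{B}_1\to\mathbb{R}$ is a linear functional with $\mu(c)=c$ for every constant function $c$ and monotone: if $f,g\in\mathcal{B}_1$ and $f\ge g$ pointwise, then $\mu(f)\ge\mu(g)$. For $f:A^2\to\mathbb{R}$ such that $y\mapsto f(x,y)$ lies in $\mathcal{B}_1$ for every $x$, write $f(x,\cdot)=\mu(y\mapsto f(x,y))$. $\mathcal{B}_2$ is a set of functions $A^2\to\mathbb{R}$ forming a real linear space that contains all constant functions and all functions $(x,y)\mapsto h(x)$ and $(x,y)\mapsto h(y)$ with $h\in\mathcal{B}_1$, and such that for every $f\in\mathcal{B}_2$: $y\mapsto f(x,y)\in\mathcal{B}_1$ for every $x$, $x\mapsto f(x,\cdot)\in\mathcal{B}_1$, and $x\mapsto f(x,x)\in\mathcal{B}_1$. For a symmetric $d\in\mathcal{B}_2$,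 $d(\cdot,\cdot)=\mu(x\mapsto d(x,\cdot))$. A function $\sigma\in\mathcal{B}_2$ is a $\Sigma_m$-proximity on $A$ if for all $x,y,z\in A$: (1) $\sigma(x,\cdot)=m$; (2) $\sigma(x,y)+\sigma(x,z)-\sigma(y,z)\le\sigma(x,x)$, with strict inequality whenever $z=y$ and $x\ne y$. *)

From Stdlib Require Import Reals.
Open Scope R_scope.

Definition lin_space_with_consts {T : Type} (B : (T -> R) -> Prop) : Prop :=
  (forall f g, B f -> B g -> B (fun x => f x + g x)) /\
  (forall (c : R) f, B f -> B (fun x => c * f x)) /\
  (forall c : R, B (fun _ => c)).

Definition mean_setting (A : Type) (B1 : (A -> R) -> Prop) (mu : (A -> R) -> R)
  (B2 : (A -> A -> R) -> Prop) : Prop :=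
  lin_space_with_consts B1 /\
  (forall f g (a b : R), B1 f -> B1 g ->
      mu (fun x => a * f x + b * g x) = a * mu f + b * mu g) /\
  (forall c : R, mu (fun _ => c) = c) /\
  (forall f g, B1 f -> B1 g -> (forall x, g x <= f x) -> mu g <= mu f) /\
  (forall f g, B2 f -> B2 g -> B2 (fun x y => f x y + g x y)) /\
  (forall (c : R) f, B2 f -> B2 (fun x y => c * f x y)) /\
  (forall c : R, B2 (fun _ _ => c)) /\
  (forall h, B1 h -> B2 (fun x _ => h x)) /\
  (forall h, B1 h -> B2 (fun _ y => h y)) /\
  (forall f, B2 f ->
     (forall x, B1 (fun y => f x y)) /\
     B1 (fun x => mu (fun y => f x y)) /\
     B1 (fun x => f x x)).

(* f(x,.) = mu (y |-> f(x,y)) *)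
Definition dot1 {A : Type} (mu : (A -> R) -> R) (f : A -> A -> R) (x : A) : R :=
  mu (fun y => f x y).

(* d(.,.) = mu (x |-> d(x,.)) *)
Definition dot2 {A : Type} (mu : (A -> R) -> R) (f : A -> A -> R) : R :=
  mu (fun x => dot1 mu f x).

Definition is_metric {A : Type} (d : A -> A -> R) : Prop :=
  forall x y z, (d x y = 0 <-> x = y) /\ d x y + d x z - d y z >= 0.

Definition is_Sigma_proximity {A : Type} (mu : (A -> R) -> R)
  (B2 : (A -> A -> R) -> Prop) (m : R) (s : A -> A -> R) : Prop :=
  B2 s /\
  (forall x, dot1 mu s x = m) /\
  (forall x y z,
     s x y + s x z - s y z <= s x x /\
     (z = y -> x <> y -> s x y + s x z - s y z < s x x)).

Definition phi {A : Type} (mu : (A -> R) -> R) (m : R) (d : A -> A -> R) : A -> A -> R :=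
  fun x y => dot1 mu d x + dot1 mu d y - d x y - dot2 mu d + m.

Definition psi {A : Type} (s : A -> A -> R) : A -> A -> R :=
  fun x y => / 2 * (s x x + s y y) - s x y.

(* Write d(x,.) for mu (y |-> d x y).  For a metric d, phi(d)(x,x) = 2 d(x,.) - d(.,.) + m, so
   the proximity inequalities for phi(d) are the triangle inequality and positivity of d,
   and averaging phi(d)(x,y) in y gives m by linearity of the mean.  Conversely, psi(s) is a
   metric by the proximity inequalities, and its averages are read off from s(x,.) = m,
   which turns phi(psi(s)) back into s; psi(phi(d)) = d needs only d(x,x) = 0. *)
From Stdlib Require Import Reals Lra FunctionalExtensionality Classical.
Open Scope R_scope.

Section Metric.

Variables (A : Type) (d : A -> A -> R).
Hypothesis Hd : is_metric d.

Lemma metric_diag0 x : d x x = 0.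
Proof. now apply (proj1 (Hd x x x)). Qed.

Lemma metric_triangle x y z : d y z <= d x y + d x z.
Proof. pose proof (proj2 (Hd x y z)); lra. Qed.

Lemma metric_pos x y : x <> y -> 0 < d x y.
Proof.
  intros Hxy.
  assert (Hge : 0 <= d x y).
  { pose proof (proj2 (Hd x y y)); rewrite metric_diag0 in *; lra. }
  destruct (Rle_lt_or_eq_dec _ _ Hge) as [Hlt | Heq]; [exact Hlt |].
  destruct Hxy; apply (proj1 (Hd x y x)); now symmetry.
Qed.

End Metric.

Section MeanSetting.

Variables (A : Type) (B1 : (A -> R) -> Prop) (mu : (A -> R) -> R)
  (B2 : (A -> A -> R) -> Prop).
Hypothesis Hset : mean_setting A B1 mu B2.

Lemma B1_scale c f : B1 f -> B1 (fun x => c * f x).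
Proof. destruct Hset as [[_ [Hsc _]] _]; auto. Qed.

Lemma B2_sections f : B2 f ->
  (forall x, B1 (fun y => f x y)) /\ B1 (dot1 mu f) /\ B1 (fun x => f x x).
Proof. destruct Hset as [_ [_ [_ [_ [_ [_ [_ [_ [_ H]]]]]]]]]; exact (H f). Qed.

Lemma mu_affine a b c f g : B1 f -> B1 g ->
  mu (fun y => a + b * f y + c * g y) = a + b * mu f + c * mu g.
Proof.
  destruct Hset as [[Hadd [Hsc Hc]] [Hlin [Hmc _]]]; intros Hf Hg.
  set (h := fun y => b * f y + c * g y).
  replace (fun y => a + b * f y + c * g y) with (fun y => 1 * h y + a * 1)
    by (apply functional_extensionality; intro y; unfold h; ring).
  rewrite (Hlin h (fun _ => 1) 1 a) by (unfold h; auto).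
  rewrite Hmc; unfold h; rewrite Hlin by auto; ring.
Qed.

Lemma mu_affine1 a b f : B1 f -> mu (fun y => a + b * f y) = a + b * mu f.
Proof.
  intros Hf; rewrite <- (Rplus_0_r (a + b * mu f)), <- (Rmult_0_l (mu f)).
  rewrite <- mu_affine by auto; f_equal.
  apply functional_extensionality; intro; ring.
Qed.

Lemma B2_affine f g h c a : B1 f -> B1 g -> B2 h ->
  B2 (fun x y => f x + g y + c * h x y + a).
Proof.
  destruct Hset as [_ [_ [_ [_ [Hadd [Hsc [Hc [Hl [Hr _]]]]]]]]]; intros Hf Hg Hh.
  repeat apply Hadd; auto.
Qed.

Variable m : R.

Lemma B2_phi d : B2 d -> B2 (phi mu m d).
Proof.
  intros Hb; destruct (B2_sections d Hb) as [_ [Hdot _]].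
  replace (phi mu m d)
    with (fun x y => dot1 mu d x + dot1 mu d y + -1 * d x y + (m - dot2 mu d)).
  - now apply B2_affine.
  - unfold phi; do 2 (apply functional_extensionality; intro); ring.
Qed.

Lemma dot1_phi d x : B2 d -> dot1 mu (phi mu m d) x = m.
Proof.
  intros Hb; destruct (B2_sections d Hb) as [Hrow [Hdot _]].
  unfold dot1 at 1, phi.
  replace (fun y => dot1 mu d x + dot1 mu d y - d x y - dot2 mu d + m)
    with (fun y => (dot1 mu d x - dot2 mu d + m) + 1 * dot1 mu d y + -1 * d x y)
    by (apply functional_extensionality; intro; ring).
  rewrite (mu_affine _ _ _ (dot1 mu d) (fun y => d x y)) by auto.
  unfold dot2, dot1; ring.
Qed.

Lemma phi_Sigma_proximity d : is_metric d -> B2 d -> is_Sigma_proximity mu B2 m (phi mu m d).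
Proof.
  intros Hd Hb; split; [now apply B2_phi | split; [intro; now apply dot1_phi |]].
  intros x y z; unfold phi; rewrite (metric_diag0 _ d Hd x); split.
  - pose proof (metric_triangle _ d Hd x y z); lra.
  - intros -> Hxy; rewrite (metric_diag0 _ d Hd y).
    pose proof (metric_pos _ d Hd x y Hxy); lra.
Qed.

Section Proximity.

Variable s : A -> A -> R.
Hypothesis Hs : is_Sigma_proximity mu B2 m s.

Lemma psi_metric : is_metric (psi s).
Proof.
  destruct Hs as [_ [_ Hin]]; intros x y z; unfold psi; split.
  - split; [| intros ->; lra].
    intros E; apply NNPP; intros Hxy.
    pose proof (proj2 (Hin x y y) eq_refl Hxy); lra.
  - pose proof (proj1 (Hin x y z)); lra.
Qed.

Lemma B2_psi : B2 (psi s).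
Proof.
  destruct Hs as [Hb _]; destruct (B2_sections s Hb) as [_ [_ Hdiag]].
  replace (psi s) with (fun x y => / 2 * s x x + / 2 * s y y + -1 * s x y + 0).
  - apply B2_affine; auto; now apply B1_scale.
  - unfold psi; do 2 (apply functional_extensionality; intro); ring.
Qed.

Lemma dot1_psi x : dot1 mu (psi s) x = / 2 * s x x + / 2 * mu (fun y => s y y) - m.
Proof.
  destruct Hs as [Hb [Hdot _]]; destruct (B2_sections s Hb) as [Hrow [_ Hdiag]].
  unfold dot1 at 1, psi.
  replace (fun y => / 2 * (s x x + s y y) - s x y)
    with (fun y => / 2 * s x x + / 2 * s y y + -1 * s x y)
    by (apply functional_extensionality; intro; ring).
  rewrite (mu_affine _ _ _ (fun y => s y y) (fun y => s x y)) by auto.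
  rewrite <- (Hdot x); unfold dot1; ring.
Qed.

Lemma dot2_psi : dot2 mu (psi s) = mu (fun y => s y y) - m.
Proof.
  destruct Hs as [Hb _]; destruct (B2_sections s Hb) as [_ [_ Hdiag]].
  unfold dot2.
  replace (fun x => dot1 mu (psi s) x)
    with (fun x => (/ 2 * mu (fun y => s y y) - m) + / 2 * s x x)
    by (apply functional_extensionality; intro; rewrite dot1_psi; ring).
  rewrite mu_affine1 by auto; field.
Qed.

Lemma phi_psi : phi mu m (psi s) = s.
Proof.
  do 2 (apply functional_extensionality; intro).
  unfold phi; rewrite !dot1_psi, dot2_psi; unfold psi; field.
Qed.

End Proximity.

End MeanSetting.

Lemma psi_phi (A : Type) (mu : (A -> R) -> R) (m : R) (d : A -> A -> R) :
  is_metric d -> psi (phi mu m d) = d.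
Proof.
  intros Hd; do 2 (apply functional_extensionality; intro).
  unfold psi, phi; rewrite !(metric_diag0 _ d Hd); field.
Qed.

Theorem theorem1 (A : Type) (HA : inhabited A) (m : R)
  (B1 : (A -> R) -> Prop) (mu : (A -> R) -> R) (B2 : (A -> A -> R) -> Prop)
  (Hset : mean_setting A B1 mu B2) :
  (forall d, is_metric d -> B2 d -> is_Sigma_proximity mu B2 m (phi mu m d)) /\
  (forall s, is_Sigma_proximity mu B2 m s -> is_metric (psi s) /\ B2 (psi s)) /\
  (forall d, is_metric d -> B2 d -> psi (phi mu m d) = d) /\
  (forall s, is_Sigma_proximity mu B2 m s -> phi mu m (psi s) = s).
Proof.
  split; [| split; [| split]].
  - exact (phi_Sigma_proximity A B1 mu B2 Hset m).
  - intros s Hs; split; [exact (psi_metric A mu B2 m s Hs) | exact (B2_psi A B1 mu B2 Hset m s Hs)].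
  - intros d Hd _; exact (psi_phi A mu m d Hd).
  - exact (phi_psi A B1 mu B2 Hset m).
Qed.
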